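(* Let $S$ be a set of primes and $(a_{S,n})_{n\ge1}$ a sequence. Then \[ a_{S,n}=\prod_{p\in S}\frac{1}{p-1}\left(\frac{p+1}{|n|_p}-2\right)\quad\text{for all } n\ge1 \] if and only if \[ \sum_{n\ge1}\frac{a_{S,n}}{n^s}=\zeta(s)\prod_{p\in S}\frac{p^s+1}{p^s-p} \] (as Dirichlet series, each factor $\frac{p^s+1}{p^s-p}=\frac{1+p^{-s}}{1-p^{1-s}}$ being expanded as a Dirichlet series in $p^{-s}$).
   Context: $|\cdot|_p$ is the $p$-adic absolute value, so $|n|_p^{-1}$ is the largest power of $p$ dividing $n$. $\zeta(s)=\sum_{n\ge1}n^{-s}$. *)

From HB Require Import structures.
From mathcomp Require Import all_boot all_order all_algebra.
Set Implicit Arguments. Unset Strict Implicit. Unset Printing Implicit Defensive.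
Import Order.TTheory GRing.Theory Num.Theory.
Local Open Scope ring_scope.

Section Dirichlet.
Variable R : numFieldType.

(* Formal Dirichlet series are represented by their coefficient sequences
   f : nat -> R (only indices n >= 1 are meaningful); the product of formal
   Dirichlet series is Dirichlet convolution. *)
Definition dconv (f g : nat -> R) : nat -> R :=
  fun n => \sum_(d <- divisors n) f d * g (n %/ d)%N.

Definition dunit : nat -> R := fun n => (n == 1)%:R.

Definition zeta_coef : nat -> R := fun n => (0 < n)%N%:R.

(* 1 + p^{-s} *)
Definition euler_num (p : nat) : nat -> R :=
  fun n => ((n == 1) + (n == p))%N%:R.

(* 1/(1 - p^{1-s}) = sum_{k>=0} p^k (p^k)^{-s} *)
Definition euler_geom (p : nat) : nat -> R :=
  fun n => if n == (p ^ logn p n)%N then (p ^ logn p n)%:R else 0.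

Definition euler_factor (p : nat) : nat -> R :=
  dconv (euler_num p) (euler_geom p).

Definition euler_partial (S : pred nat) (N : nat) : nat -> R :=
  \big[dconv/dunit]_(0 <= p < N | p \in S) euler_factor p.

End Dirichlet.

Definition padic_abs_inv (p n : nat) : nat := (p ^ logn p n)%N.

Definition local_factor (R : numFieldType) (p n : nat) : R :=
  (p%:R - 1)^-1 * ((p.+1)%:R * (padic_abs_inv p n)%:R - 2).

(* "eventually in N": used to express the (coefficientwise, eventually
   stable) limit of partial products over p in S, p < N. *)
Definition eventually (P : nat -> Prop) : Prop :=
  exists N0, forall N, (N0 <= N)%N -> P N.

From HB Require Import structures.
From mathcomp Require Import all_boot all_order all_algebra.
From mathcomp Require Import zify ring.
Import Order.TTheory GRing.Theory Num.Theory.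
Local Open Scope ring_scope.

(* On positive indices
   Dirichlet convolution is associative and commutative, so
   zeta * (F_p * B) = F_p * (zeta * B).  The coefficients of
   F_p = (1 + p^-s) / (1 - p^(1-s)) live on the powers of p, with F_p(1) = 1
   and F_p(p^k) = p^k + p^(k-1) for k >= 1, hence
   (zeta * F_p * B)(n) = sum_(k <= v_p(n)) F_p(p^k) (zeta * B)(n / p^k).
   The last factor does not depend on k since the primes of B differ from p,
   and 1 + sum_(1 <= k <= v) (p^k + p^(k-1)) = ((p + 1) p^v - 2) / (p - 1). *)

Section DirichletConvolution.
Variable R : numFieldType.
Implicit Types (f g h : nat -> R) (n : nat).

(* Since [divisors 0 = [:: 1]], the identities below only hold at [n > 0]. *)

Lemma dconvE K f g n : (0 < n)%N -> (n < K)%N ->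
  dconv f g n = \sum_(i < K) \sum_(j < K | (i * j == n)%N) f i * g j.
Proof.
move=> n_gt0 n_lt_K.
have divisorsE : perm_eq (divisors n) [seq d <- index_iota 0 K | (d %| n)%N].
  apply: uniq_perm; rewrite ?divisors_uniq ?filter_uniq ?iota_uniq // => d.
  rewrite mem_filter mem_index_iota -dvdn_divisors //.
  by case: (boolP (d %| n)%N) => //= /(dvdn_leq n_gt0); lia.
rewrite /dconv (perm_big _ divisorsE) big_filter big_mkcond big_mkord.
apply: eq_bigr => i _; case: (boolP (i %| n)%N) => [dvd_in | ndvd_in].
- have i_gt0 : (0 < i)%N by apply: dvdn_gt0 dvd_in.
  rewrite (eq_bigl (fun j : 'I_K => j == (n %/ i)%N :> nat)) => [|j].
    by rewrite (big_ord1_eq _ (fun j => f i * g j)) ifT //; have := leq_div n i; lia.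
  by rewrite -{1}(divnK dvd_in) mulnC eqn_pmul2r.
- rewrite big_pred0 // => j; apply/negP => /eqP ij_n.
  by move: ndvd_in; rewrite -ij_n dvdn_mulr.
Qed.

Lemma dconv_dconvE f g h n : (0 < n)%N ->
  dconv f (dconv g h) n =
  \sum_(i < n.+1) \sum_(j < n.+1) \sum_(k < n.+1 | (i * (j * k) == n)%N) f i * (g j * h k).
Proof.
move=> n_gt0; rewrite (dconvE n.+1) //; apply: eq_bigr => i _.
transitivity (\sum_(m < n.+1) \sum_(j < n.+1) \sum_(k < n.+1)
    if (i * m == n)%N then if (j * k == m)%N then f i * (g j * h k) else 0 else 0).
  rewrite big_mkcond; apply: eq_bigr => m _; case: eqP => [im_n | _]; last first.
    by rewrite big1 // => j _; rewrite big1.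
  have /andP[i_gt0 m_gt0] : (0 < i)%N && (0 < m)%N by rewrite -muln_gt0 im_n.
  rewrite (dconvE n.+1) //.
  rewrite mulr_sumr; apply: eq_bigr => j _; rewrite mulr_sumr big_mkcond.
  by apply: eq_bigr => k _; case: ifP; rewrite ?mulr0.
rewrite exchange_big; apply: eq_bigr => j _.
rewrite exchange_big [RHS]big_mkcond; apply: eq_bigr => k _.
set x := f i * _.
rewrite (eq_bigr (fun m : 'I_n.+1 =>
    if m == (j * k)%N :> nat then if (i * m == n)%N then x else 0 else 0)); last first.
  by move=> m _; rewrite [(j * k == m)%N]eq_sym; do 2 case: ifP.
rewrite -big_mkcond (big_ord1_eq _ (fun m => if (i * m == n)%N then x else 0)).
case: ltnP => // jk_gt_n; rewrite ifF //; apply/negbTE/eqP => ijk_n.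
have /andP[i_gt0 _] : (0 < i)%N && (0 < j * k)%N by rewrite -muln_gt0 ijk_n.
by move: (leq_pmull (j * k) i_gt0); rewrite ijk_n leqNgt jk_gt_n.
Qed.

Lemma dconvCA f g h n : (0 < n)%N ->
  dconv f (dconv g h) n = dconv g (dconv f h) n.
Proof.
move=> n_gt0; rewrite !dconv_dconvE // exchange_big; apply: eq_bigr => j _.
apply: eq_bigr => i _; apply: eq_big => k; first by rewrite mulnCA.
by rewrite mulrCA.
Qed.

Lemma dconvr1 f n : (0 < n)%N -> dconv f (dunit R) n = f n.
Proof.
move=> n_gt0; rewrite /dconv (bigD1_seq n) ?divisors_uniq ?divisors_id //=.
rewrite /dunit divnn n_gt0 eqxx mulr1 big1_seq ?addr0 // => d /andP[d_neq_n].
rewrite -dvdn_divisors // => /divnK nE.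
suff -> : (n %/ d == 1)%N = false by rewrite mulr0.
by apply: contraNF d_neq_n => /eqP nd1; rewrite -nE nd1 mul1n.
Qed.

Lemma big_divisors_pnat p n (F : nat -> R) : prime p -> (0 < n)%N ->
  (forall d, (d %| n)%N -> ~~ p.-nat d -> F d = 0) ->
  \sum_(d <- divisors n) F d = \sum_(k < (logn p n).+1) F (p ^ k)%N.
Proof.
move=> p_pr n_gt0 F_pnat.
rewrite (bigID (fun d => p.-nat d)) /= [X in _ + X]big1_seq ?addr0; last first.
  by move=> d /andP[d_npnat]; rewrite -dvdn_divisors // => /F_pnat; apply.
rewrite -big_filter -(big_mkord xpredT (fun k => F (p ^ k)%N)) -(big_map (expn p) xpredT F).
apply: perm_big; apply: uniq_perm.
- by rewrite filter_uniq ?divisors_uniq.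
- by rewrite map_inj_uniq ?iota_uniq //; apply: expnI; apply: prime_gt1.
move=> d; rewrite mem_filter -dvdn_divisors //; apply/andP/mapP => [[d_pnat d_dvd]|].
- exists (logn p d); last by rewrite -p_part part_pnat_id.
  by rewrite mem_index_iota leq0n ltnS -pfactor_dvdn // -p_part part_pnat_id.
- move=> [k]; rewrite mem_index_iota leq0n ltnS => k_le ->.
  by rewrite pnatX pnat_id // pfactor_dvdn.
Qed.

End DirichletConvolution.

Section EulerFactor.
Variables (R : numFieldType) (p : nat).
Hypothesis p_pr : prime p.

Lemma pnat_pexp k : p.-nat (p ^ k)%N.
Proof. by rewrite pnatX pnat_id. Qed.

Lemma euler_num_npnat d : ~~ p.-nat d -> euler_num R p d = 0.
Proof.
rewrite /euler_num; case: eqP => [->|_]; first by rewrite (pnat_pexp 0).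
by case: eqP => [->|//]; rewrite pnat_id.
Qed.

Lemma euler_geom_npnat d : ~~ p.-nat d -> euler_geom R p d = 0.
Proof. by rewrite /euler_geom; case: eqP => // ->; rewrite pnat_pexp. Qed.

Lemma euler_factor_npnat d : (0 < d)%N -> ~~ p.-nat d -> euler_factor R p d = 0.
Proof.
move=> d_gt0 d_npnat; rewrite /euler_factor /dconv big1_seq // => e /andP[_].
rewrite -dvdn_divisors // => /divnK dE.
have : ~~ (p.-nat e && p.-nat (d %/ e)%N) by rewrite -pnatM mulnC dE.
by case/nandP => [/euler_num_npnat|/euler_geom_npnat] ->; rewrite ?mul0r ?mulr0.
Qed.

Lemma euler_num_pexp j : euler_num R p (p ^ j)%N = ((j == 0) + (j == 1))%N%:R.
Proof.
have p_gt1 := prime_gt1 p_pr.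
by rewrite /euler_num -(eqn_exp2l j 0 p_gt1) -(eqn_exp2l j 1 p_gt1) expn0 expn1.
Qed.

Lemma euler_geom_pexp j : euler_geom R p (p ^ j)%N = (p ^ j)%N%:R.
Proof. by rewrite /euler_geom pfactorK // eqxx. Qed.

Lemma euler_factor_pexp k :
  euler_factor R p (p ^ k)%N = if k is k'.+1 then (p ^ k + p ^ k')%N%:R else 1.
Proof.
have p_gt0 := prime_gt0 p_pr.
rewrite /euler_factor /dconv (@big_divisors_pnat R p) ?expn_gt0 ?p_gt0 //; last first.
  by move=> d _ /euler_num_npnat ->; rewrite mul0r.
rewrite pfactorK //.
under eq_bigr => j j_lt.
  rewrite euler_num_pexp -expnB ?euler_geom_pexp //; last by rewrite -ltnS.
  over.
case: k => [|k]; first by rewrite big_ord1 mul1r.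
rewrite 2!big_ord_recl big1 => [|j _]; last by rewrite mul0r.
by rewrite /= subn0 subn1 !mul1r addr0 natrD.
Qed.

Lemma local_factorE n :
  local_factor R p n = \sum_(k < (logn p n).+1) euler_factor R p (p ^ k)%N.
Proof.
have p1_neq0 : (p%:R - 1 : R) != 0.
  by rewrite subr_eq0 pnatr_eq1 neq_ltn prime_gt1 ?orbT.
rewrite /local_factor /padic_abs_inv; apply: (canLR (mulKf p1_neq0)).
elim: (logn p n) => [|v IH].
  by rewrite big_ord1 euler_factor_pexp /= expn0 !mulr1 -addn1 natrD; ring.
rewrite big_ord_recr /= mulrDr -IH euler_factor_pexp !natrD !natrX exprS.
ring.
Qed.

Lemma local_factor_divn_pexp q k n : prime q -> q != p -> (p ^ k %| n)%N ->
  local_factor R q (n %/ p ^ k)%N = local_factor R q n.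
Proof.
move=> q_pr q_neq_p pk_dvd.
rewrite /local_factor /padic_abs_inv logn_div // lognX (logn_prime q p_pr).
by rewrite (negbTE q_neq_p) muln0 subn0.
Qed.

End EulerFactor.

Lemma dconv_zeta_euler_prod (R : numFieldType) (s : seq nat) n :
  uniq s -> all prime s -> (0 < n)%N ->
  dconv (zeta_coef R) (\big[@dconv R/dunit R]_(p <- s) euler_factor R p) n
  = \prod_(p <- s) local_factor R p n.
Proof.
elim: s n => [|p s IH] n /=.
  by rewrite !big_nil => _ _ n_gt0; rewrite dconvr1 // /zeta_coef n_gt0.
move=> /andP[p_notin_s s_uniq] /andP[p_pr s_prime] n_gt0.
rewrite !big_cons dconvCA // {1}/dconv (@big_divisors_pnat R p) //; last first.
  by move=> d /(dvdn_gt0 n_gt0) d_gt0 /(@euler_factor_npnat R p p_pr _ d_gt0) ->; rewrite mul0r.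
rewrite (@local_factorE R p p_pr) mulr_suml; apply: eq_bigr => k _.
have pk_dvd : (p ^ k %| n)%N by rewrite pfactor_dvdn // -ltnS.
have nk_gt0 : (0 < n %/ p ^ k)%N.
  by rewrite divn_gt0 ?expn_gt0 ?(prime_gt0 p_pr) // dvdn_leq.
rewrite IH //.
congr (_ * _); rewrite !big_seq; apply: eq_bigr => q q_in_s.
apply: (@local_factor_divn_pexp R p p_pr) pk_dvd; first exact: (allP s_prime).
by apply: contraNneq p_notin_s => <-.
Qed.

Theorem lemma3p4 (R : numFieldType) (S : pred nat)
    (HS : forall p, p \in S -> prime p) (a : nat -> R) :
  (forall n, (0 < n)%N ->
     eventually (fun N => a n = \prod_(0 <= p < N | p \in S) local_factor R p n))
  <->
  (forall n, (0 < n)%N ->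
     eventually (fun N => a n = dconv (zeta_coef R) (euler_partial R S N) n)).
Proof.
have euler_partialE N n : (0 < n)%N ->
    dconv (zeta_coef R) (euler_partial R S N) n = \prod_(0 <= p < N | p \in S) local_factor R p n.
  move=> n_gt0; rewrite /euler_partial -big_filter -[RHS]big_filter.
  apply: dconv_zeta_euler_prod; rewrite ?filter_uniq ?iota_uniq //.
  by apply/allP => p; rewrite mem_filter => /andP[/HS].
split=> eq_a n n_gt0; have [N0 a_eq] := eq_a n n_gt0; exists N0 => N N_ge.
  by rewrite euler_partialE //; apply: a_eq.
by rewrite -euler_partialE //; apply: a_eq.
Qed.
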